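(* For every non-empty context $\Gamma$ and formula $A$: if the sequent $\Gamma\vdash A$ is derivable in the sequent calculus, then $\varphi(\Gamma)\le A$ in the Tamari order.
   Context: Formulas are built from atoms ($p,q,\dots$) by a binary product: every formula is an atom or $A\bullet B$ for formulas $A,B$. A context is a finite (possibly empty) list of formulas; commas denote concatenation. A sequent $\Gamma\vdash A$ is a context with a formula. The sequent calculus has exactly four rules (no weakening, contraction or exchange): ($\bullet L$) from $A,B,\Delta\vdash C$ infer $A\bullet B,\Delta\vdash C$ (the product must be the leftmost formula); ($\bullet R$) from $\Gamma\vdash A$ and $\Delta\vdash B$ infer $\Gamma,\Delta\vdash A\bullet B$; ($id$) $A\vdash A$; ($cut$) from $\Theta\vdash A$ and $\Gamma,A,\Delta\vdash B$ infer $\Gamma,\Theta,\Delta\vdash B$. A sequent is derivable if it is the conclusion of a finite derivation tree built from these rules with no undischarged premises. The Tamari order $\le$ on formulas is the least preorder such that $(A\bullet B)\bullet C\le A\bullet(B\bullet C)$ for all $A,B,C$, and $A_1\le A_2$, $B_1\le B_2$ imply $A_1\bullet B_1\le A_2\bullet B_2$. For a non-empty context, $\varphi$ is its left-associated product: $\varphi(A)=A$ and $\varphi(\Gamma,A)=\varphi(\Gamma)\bullet A$; so $\varphi(A_0,A_1,\dots,A_n)=(\cdots(A_0\bullet A_1)\bullet\cdots)\bullet A_n$. *)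

From Stdlib Require Import List.
Import ListNotations.

Inductive formula : Type :=
| Atom : nat -> formula
| Prod : formula -> formula -> formula.

Definition context := list formula.

Inductive derivable : context -> formula -> Prop :=
| d_prodL : forall A B Delta C,
    derivable (A :: B :: Delta) C ->
    derivable (Prod A B :: Delta) C
| d_prodR : forall Gamma Delta A B,
    derivable Gamma A -> derivable Delta B ->
    derivable (Gamma ++ Delta) (Prod A B)
| d_id : forall A, derivable [A] A
| d_cut : forall Theta Gamma Delta A B,
    derivable Theta A ->
    derivable (Gamma ++ A :: Delta) B ->
    derivable (Gamma ++ Theta ++ Delta) B.

Inductive tamari_le : formula -> formula -> Prop :=
| t_refl : forall A, tamari_le A A
| t_trans : forall A B C, tamari_le A B -> tamari_le B C -> tamari_le A C
| t_assoc : forall A B C, tamari_le (Prod (Prod A B) C) (Prod A (Prod B C))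
| t_mono : forall A1 A2 B1 B2,
    tamari_le A1 A2 -> tamari_le B1 B2 ->
    tamari_le (Prod A1 B1) (Prod A2 B2).

(* Left-associated product of a non-empty context A0, A1, ..., An:
   phi A0 [A1;...;An] = (...(A0 . A1) . ...) . An *)
Definition phi (A0 : formula) (rest : context) : formula :=
  fold_left Prod rest A0.

From Stdlib Require Import List.
Import ListNotations.

(* Every derivable sequent has a non-empty
   context, and [phi] is monotone in its head and satisfies
   [phi X (g ++ Y :: d) <= phi X g . phi Y d] by repeated associativity.
   So the two halves of a bullet-R premise can be combined under a single
   product, and the block [Theta] replaced by [A] in a cut. *)

Lemma derivable_nonempty : forall Gamma A, derivable Gamma A -> Gamma <> [].
Proof.
  induction 1; try discriminate.
  - destruct Gamma; [exact IHderivable2 | discriminate].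
  - destruct Gamma; [destruct Theta; [contradiction | discriminate] | discriminate].
Qed.

Lemma phi_app : forall X l d, phi X (l ++ d) = phi (phi X l) d.
Proof. intros; apply fold_left_app. Qed.

Lemma phi_le_head : forall r X Y, tamari_le X Y -> tamari_le (phi X r) (phi Y r).
Proof.
  induction r as [|Z r IH]; intros X Y HXY; [exact HXY|].
  apply IH, t_mono; [exact HXY | apply t_refl].
Qed.

Lemma phi_prod_le : forall r X Y, tamari_le (phi (Prod X Y) r) (Prod X (phi Y r)).
Proof.
  induction r as [|Z r IH]; intros X Y; [apply t_refl|].
  eapply t_trans; [apply (phi_le_head r _ _ (t_assoc X Y Z)) | apply IH].
Qed.

Lemma phi_app_le_prod : forall X g Y d,
  tamari_le (phi X (g ++ Y :: d)) (Prod (phi X g) (phi Y d)).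
Proof. intros; rewrite phi_app; apply phi_prod_le. Qed.

Lemma phi_cut_le : forall X g T t d A,
  tamari_le (phi T t) A ->
  tamari_le (phi X (g ++ T :: t ++ d)) (phi X (g ++ A :: d)).
Proof.
  intros X g T t d A HTA.
  replace (g ++ T :: t ++ d) with ((g ++ T :: t) ++ d) by (rewrite <- app_assoc; reflexivity).
  replace (g ++ A :: d) with ((g ++ [A]) ++ d) by (rewrite <- app_assoc; reflexivity).
  rewrite !phi_app; apply phi_le_head.
  eapply t_trans; [exact (phi_prod_le t (phi X g) T) | apply t_mono; [apply t_refl | exact HTA]].
Qed.

Lemma derivable_tamari_le : forall Gamma A, derivable Gamma A ->
  forall X r, Gamma = X :: r -> tamari_le (phi X r) A.
Proof.
  induction 1 as [A B Delta C _ IH | Gamma Delta A B HG IHG HD IHD | A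
                 | Theta Gamma Delta A B HT IHT _ IH]; intros X r E.
  - injection E as <- <-. exact (IH A (B :: Delta) eq_refl).
  - destruct Gamma as [|G0 g]; [contradiction (derivable_nonempty _ _ HG eq_refl)|].
    destruct Delta as [|D0 d]; [contradiction (derivable_nonempty _ _ HD eq_refl)|].
    injection E as <- <-.
    eapply t_trans; [apply phi_app_le_prod | apply t_mono; [apply IHG | apply IHD]; reflexivity].
  - injection E as <- <-. apply t_refl.
  - destruct Theta as [|T0 t]; [contradiction (derivable_nonempty _ _ HT eq_refl)|].
    destruct Gamma as [|G0 g]; injection E as <- <-.
    + rewrite phi_app.
      eapply t_trans; [apply phi_le_head, (IHT T0 t eq_refl) | exact (IH A Delta eq_refl)].
    + eapply t_trans; [apply phi_cut_le, (IHT T0 t eq_refl) | exact (IH G0 (g ++ A :: Delta) eq_refl)].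
Qed.

Theorem theorem1p6 : forall (A0 : formula) (rest : context) (A : formula),
  derivable (A0 :: rest) A -> tamari_le (phi A0 rest) A.
Proof.
  intros A0 rest A H.
  exact (derivable_tamari_le _ _ H A0 rest eq_refl).
Qed.
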